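(* Let $s\ge 2$ be an even integer, $n=s^2$, and $k\ge1$. Let $\mathcal{G}^{2d}$ be the $s\times s$ two-dimensional grid graph, whose nodes are the pairs $(a,b)$ with $1\le a,b\le s$ and in which $(a,b)$ and $(a',b')$ are adjacent iff $|a-a'|+|b-b'|=1$. Then $$M^{\mathcal{G}^{2d}}_{k,n}\le 2M^C_{k,\,n/2-\sqrt n/2}+M^C_{k,\sqrt n}+2 .$$
   Context: For a graph $G$ on $n$ nodes, a measurement matrix for $G$ is a $0$-$1$ matrix with columns indexed by the nodes in which every nonzero row has a support that induces a connected subgraph of $G$. A vector is $k$-sparse if it has at most $k$ nonzero entries. $A$ identifies all $k$-sparse vectors if $Ax_1\ne Ax_2$ for every two distinct $k$-sparse $x_1,x_2\in\mathbb{R}^n$. $M^G_{k,n}$ is the minimum number of rows of a measurement matrix for $G$ that identifies all $k$-sparse vectors. $M^C_{k,N}$ is the minimum number of rows of an arbitrary $0$-$1$ matrix with $N$ columns that identifies all $k$-sparse vectors in $\mathbb{R}^N$. *)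

From Stdlib Require Import Reals Arith List.
Open Scope R_scope.

Fixpoint sum_upto (N : nat) (f : nat -> R) : R :=
  match N with
  | O => 0
  | S N' => sum_upto N' f + f N'
  end.

(* A 0-1 matrix with m rows and N columns is encoded as A : nat -> nat -> bool,
   entry (i,j) meaningful for i < m, j < N.  Vectors x in R^N are x : nat -> R
   with coordinates j < N. *)
Definition mat_apply (N : nat) (A : nat -> nat -> bool) (x : nat -> R) (i : nat) : R :=
  sum_upto N (fun j => if A i j then x j else 0).

Definition k_sparse (k N : nat) (x : nat -> R) : Prop :=
  exists S : list nat, (length S <= k)%nat /\ NoDup S /\
    forall j, (j < N)%nat -> ~ In j S -> x j = 0.

Definition identifies (k m N : nat) (A : nat -> nat -> bool) : Prop :=
  forall x1 x2 : nat -> R,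
    k_sparse k N x1 -> k_sparse k N x2 ->
    (exists j, (j < N)%nat /\ x1 j <> x2 j) ->
    exists i, (i < m)%nat /\ mat_apply N A x1 i <> mat_apply N A x2 i.

Fixpoint path_in (adj : nat -> nat -> Prop) (S : nat -> Prop) (u : nat) (p : list nat) : Prop :=
  match p with
  | nil => True
  | w :: p' => S w /\ adj u w /\ path_in adj S w p'
  end.

Definition last_of (u : nat) (p : list nat) : nat := last p u.

Definition induces_connected (adj : nat -> nat -> Prop) (S : nat -> Prop) : Prop :=
  forall u v, S u -> S v -> exists p, path_in adj S u p /\ last_of u p = v.

Definition row_support (n : nat) (A : nat -> nat -> bool) (i : nat) : nat -> Prop :=
  fun j => (j < n)%nat /\ A i j = true.

Definition measurement_matrix (n : nat) (adj : nat -> nat -> Prop) (m : nat)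
    (A : nat -> nat -> bool) : Prop :=
  forall i, (i < m)%nat ->
    (exists j, (j < n)%nat /\ A i j = true) ->
    induces_connected adj (row_support n A i).

Definition is_min (P : nat -> Prop) (m : nat) : Prop :=
  P m /\ forall m', P m' -> (m <= m')%nat.

Definition MG_is (k n : nat) (adj : nat -> nat -> Prop) (m : nat) : Prop :=
  is_min (fun r => exists A, measurement_matrix n adj r A /\ identifies k r n A) m.

Definition MC_is (k N m : nat) : Prop :=
  is_min (fun r => exists A, identifies k r N A) m.

Definition grid_coord (s j : nat) : nat * nat := (j / s + 1, j mod s + 1)%nat.

Definition absdiff (a b : nat) : nat := (a - b + (b - a))%nat.

Definition grid_adj (s : nat) (u v : nat) : Prop :=
  (u < s * s)%nat /\ (v < s * s)%nat /\
  (absdiff (fst (grid_coord s u)) (fst (grid_coord s v))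
   + absdiff (snd (grid_coord s u)) (snd (grid_coord s v)) = 1)%nat.

From Stdlib Require Import Reals Arith List Lia Lra Bool Permutation Classical.
Local Open Scope nat_scope.

(* Split the grid into column 0 (s nodes) and two halves H0, H1: the nodes outside
   column 0 in even, resp. odd rows (n/2 - sqrt(n)/2 nodes each). The complement of
   each part is connected: the complement of a half is a comb (column 0 plus every row
   of the other parity), the complement of column 0 is a comb on column 1, and every node
   of a part is adjacent to its complement. Hence any row whose support contains the
   complement of a part is connected, whatever it does on the part itself.

   Given a matrix C1 identifying k-sparse vectors on n/2 - sqrt(n)/2 columns and C2 on
   sqrt(n) columns, the grid matrix has the rows "C1 read on H_p, plus everything outside
   H_p" (p = 0, 1), "C2 read on column 0, plus everything outside column 0", and the two
   complements of H0 and H1. Subtracting the complement rows recovers C1 applied to each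
   half, which determines a k-sparse vector on both halves; the mass outside column 0 is
   then known, and C2 determines the vector on column 0. *)

Lemma last_cons {A} (w u : A) (l : list A) : last (w :: l) u = last l w.
Proof.
  revert w u; induction l as [|a l IH]; intros w u; [reflexivity|].
  change (last (a :: l) u = last (a :: l) w). now rewrite !IH.
Qed.

Section Reachability.
Variable adj : nat -> nat -> Prop.

Definition reach (S : nat -> Prop) (u v : nat) : Prop :=
  exists p, path_in adj S u p /\ last_of u p = v.

Lemma reach_refl S u : reach S u u.
Proof. exists nil. split; simpl; auto. Qed.

Lemma reach_step (S : nat -> Prop) u v : S v -> adj u v -> reach S u v.
Proof. intros. exists (v :: nil). simpl. auto. Qed.

Lemma reach_trans S u v w : reach S u v -> reach S v w -> reach S u w.
Proof.
  intros [p [Hp Hl]] [q [Hq Hl']]. exists (p ++ q). unfold last_of in *.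
  revert u Hp Hl. induction p as [|a p IH]; intros u Hp Hl.
  - simpl in *. subst. auto.
  - destruct Hp as [Sa [Hua Hp]]. rewrite last_cons in Hl.
    destruct (IH a Hp Hl) as [Hpq Hlast].
    simpl app. rewrite last_cons. simpl. auto.
Qed.

Lemma reach_mono (S S' : nat -> Prop) u v :
  (forall x, S x -> S' x) -> reach S u v -> reach S' u v.
Proof.
  intros HS [p [Hp Hl]]. exists p. split; auto. clear Hl. revert u Hp.
  induction p; simpl; intros u Hp; auto. destruct Hp as [? [? ?]]. eauto.
Qed.

Hypothesis adj_sym : forall a b, adj a b -> adj b a.

Lemma reach_sym (S : nat -> Prop) u v : S u -> reach S u v -> reach S v u.
Proof.
  intros Su [p [Hp Hl]]. unfold last_of in Hl. revert u Su Hp Hl.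
  induction p as [|a p IH]; intros u Su Hp Hl.
  - simpl in Hl. subst. apply reach_refl.
  - destruct Hp as [Sa [Hua Hp]]. rewrite last_cons in Hl.
    apply reach_trans with a; auto. apply reach_step; auto.
Qed.

Lemma connected_of_core (Y S : nat -> Prop) (h : nat) :
  (forall j, Y j -> S j) ->
  (forall j, Y j -> reach Y j h) ->
  (forall j, S j -> Y j \/ exists w, Y w /\ adj j w) ->
  induces_connected adj S.
Proof.
  intros HYS HYh Hfringe u v Su Sv.
  assert (Hhub : forall w, S w -> reach S w h).
  { intros w Sw. destruct (Hfringe w Sw) as [Yw | [w' [Yw' Hww']]].
    - exact (reach_mono Y S w h HYS (HYh w Yw)).
    - apply reach_trans with w'; [apply reach_step; auto|].
      exact (reach_mono Y S w' h HYS (HYh w' Yw')). }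
  change (reach S u v). apply reach_trans with h; auto. apply reach_sym; auto.
Qed.

End Reachability.

Local Open Scope R_scope.

Lemma sum_upto_ext n f g :
  (forall j, (j < n)%nat -> f j = g j) -> sum_upto n f = sum_upto n g.
Proof. induction n; simpl; intros H; auto. rewrite IHn, H; auto. Qed.

Lemma sum_upto_plus n f g :
  sum_upto n (fun j => f j + g j) = sum_upto n f + sum_upto n g.
Proof. induction n; simpl; [lra|]. rewrite IHn; lra. Qed.

Fixpoint sum_list (l : list nat) (f : nat -> R) : R :=
  match l with nil => 0 | a :: l' => f a + sum_list l' f end.

Lemma sum_list_app l l' f : sum_list (l ++ l') f = sum_list l f + sum_list l' f.
Proof. induction l; simpl; [lra|]. rewrite IHl; lra. Qed.

Lemma sum_upto_list n f : sum_upto n f = sum_list (seq 0 n) f.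
Proof. induction n; [reflexivity|]. rewrite seq_S, sum_list_app, <- IHn. simpl. lra. Qed.

Lemma sum_list_filter (P : nat -> bool) l h :
  sum_list l (fun j => if P j then h j else 0) = sum_list (filter P l) h.
Proof. induction l; simpl; auto. destruct (P a); simpl; rewrite IHl; lra. Qed.

Lemma sum_list_map d l h : sum_list l (fun j => h (d j)) = sum_list (map d l) h.
Proof. induction l; simpl; auto. rewrite IHl; lra. Qed.

Lemma sum_list_perm l l' h : Permutation l l' -> sum_list l h = sum_list l' h.
Proof. induction 1; simpl; lra. Qed.

Definition enumerates (n M : nat) (P : nat -> bool) (e dec : nat -> nat) : Prop :=
  (forall t, (t < M)%nat -> (e t < n)%nat /\ P (e t) = true /\ dec (e t) = t) /\
  (forall j, (j < n)%nat -> P j = true -> (dec j < M)%nat /\ e (dec j) = j).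

Lemma sum_reindex n M P e dec (h : nat -> R) :
  enumerates n M P e dec ->
  sum_upto n (fun j => if P j then h (dec j) else 0) = sum_upto M h.
Proof.
  intros [He Hd]. rewrite !sum_upto_list, sum_list_filter, sum_list_map.
  apply sum_list_perm, NoDup_Permutation.
  - apply NoDup_map_NoDup_ForallPairs; [|apply NoDup_filter, seq_NoDup].
    intros a b Ha Hb Hab. apply filter_In in Ha, Hb.
    destruct Ha as [Ha Pa], Hb as [Hb Pb]. apply in_seq in Ha, Hb.
    destruct (Hd a) as [_ Ea]; [lia|auto|]. destruct (Hd b) as [_ Eb]; [lia|auto|].
    congruence.
  - apply seq_NoDup.
  - intros t. rewrite in_map_iff, in_seq. split.
    + intros [j [<- Hj]]. apply filter_In in Hj. destruct Hj as [Hj Pj]. apply in_seq in Hj.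
      destruct (Hd j); [lia|auto|lia].
    + intros Ht. destruct (He t) as [Hlt [Pe De]]; [lia|].
      exists (e t). split; auto. apply filter_In. split; auto. apply in_seq. lia.
Qed.

Lemma k_sparse_reindex k n M (x : nat -> R) (e dec : nat -> nat) :
  (forall t, (t < M)%nat -> (e t < n)%nat /\ dec (e t) = t) ->
  k_sparse k n x -> k_sparse k M (fun t => x (e t)).
Proof.
  intros He [S [HL [HN HS]]].
  set (hit := fun t => if in_dec Nat.eq_dec (e t) S then true else false).
  exists (filter hit (seq 0 M)). split; [|split].
  - apply Nat.le_trans with (length S); [|exact HL].
    rewrite <- (length_map e). apply NoDup_incl_length.
    + apply NoDup_map_NoDup_ForallPairs; [|apply NoDup_filter, seq_NoDup].
      intros a b Ha Hb Hab. apply filter_In in Ha, Hb.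
      destruct Ha as [Ha _], Hb as [Hb _]. apply in_seq in Ha, Hb.
      destruct (He a) as [_ Ea]; [lia|]. destruct (He b) as [_ Eb]; [lia|]. congruence.
    + intros y Hy. apply in_map_iff in Hy. destruct Hy as [t [<- Ht]].
      apply filter_In in Ht. destruct Ht as [_ Ht]. unfold hit in Ht.
      destruct (in_dec Nat.eq_dec (e t) S); congruence.
  - apply NoDup_filter, seq_NoDup.
  - intros t Ht Hn. destruct (He t) as [Hlt _]; [exact Ht|]. apply HS; [exact Hlt|].
    intro Hin. apply Hn. apply filter_In. split; [apply in_seq; lia|].
    unfold hit. destruct (in_dec Nat.eq_dec (e t) S); tauto.
Qed.

Lemma identifies_of_injective k m N A :
  (forall x1 x2, k_sparse k N x1 -> k_sparse k N x2 ->
     (forall i, (i < m)%nat -> mat_apply N A x1 i = mat_apply N A x2 i) ->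
     forall j, (j < N)%nat -> x1 j = x2 j) ->
  identifies k m N A.
Proof.
  intros Hinj x1 x2 S1 S2 [j [Hj Hne]]. apply NNPP. intros Hall. apply Hne.
  apply (Hinj x1 x2 S1 S2); [|exact Hj].
  intros i Hi. apply NNPP. intros Hd. apply Hall. exists i. auto.
Qed.

Definition block_row (P : nat -> bool) (dec : nat -> nat) (D : nat -> bool) (j : nat) : bool :=
  if P j then D (dec j) else true.

Lemma block_row_sum n M P e dec D (x : nat -> R) :
  enumerates n M P e dec ->
  sum_upto n (fun j => if block_row P dec D j then x j else 0) =
  sum_upto M (fun t => if D t then x (e t) else 0) + sum_upto n (fun j => if P j then 0 else x j).
Proof.
  intros Henum. rewrite <- (sum_reindex n M P e dec _ Henum), <- sum_upto_plus.
  apply sum_upto_ext. intros j Hj. unfold block_row.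
  destruct (P j) eqn:Pj.
  - destruct (proj2 Henum j Hj Pj) as [_ Ej]. rewrite Ej. lra.
  - lra.
Qed.

Lemma complement_row_sum n P dec (x : nat -> R) :
  sum_upto n (fun j => if block_row P dec (fun _ => false) j then x j else 0) =
  sum_upto n (fun j => if P j then 0 else x j).
Proof. apply sum_upto_ext. intros j _. unfold block_row. now destruct (P j). Qed.

Lemma block_recovery k n M mC C P e dec (x1 x2 : nat -> R) :
  identifies k mC M C -> enumerates n M P e dec ->
  k_sparse k n x1 -> k_sparse k n x2 ->
  sum_upto n (fun j => if P j then 0 else x1 j) = sum_upto n (fun j => if P j then 0 else x2 j) ->
  (forall i, (i < mC)%nat ->
     sum_upto n (fun j => if block_row P dec (C i) j then x1 j else 0) =
     sum_upto n (fun j => if block_row P dec (C i) j then x2 j else 0)) ->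
  forall t, (t < M)%nat -> x1 (e t) = x2 (e t).
Proof.
  intros HC Henum S1 S2 Hout Hrows t Ht.
  assert (He : forall t, (t < M)%nat -> (e t < n)%nat /\ dec (e t) = t)
    by (intros u Hu; destruct (proj1 Henum u Hu) as [? [_ ?]]; auto).
  apply NNPP. intros Hne.
  destruct (HC (fun u => x1 (e u)) (fun u => x2 (e u))) as [i [Hi Hdiff]].
  - exact (k_sparse_reindex k n M x1 e dec He S1).
  - exact (k_sparse_reindex k n M x2 e dec He S2).
  - exists t. auto.
  - apply Hdiff. unfold mat_apply.
    pose proof (Hrows i Hi) as Hrow. rewrite !(block_row_sum n M P e dec) in Hrow by exact Henum.
    lra.
Qed.

Local Open Scope nat_scope.

Lemma divmod_unique b q c : c < b -> (q * b + c) / b = q /\ (q * b + c) mod b = c.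
Proof.
  intros Hc. rewrite Nat.div_add_l, Nat.div_small by lia. split; [lia|].
  rewrite Nat.add_comm, Nat.Div0.mod_add. apply Nat.mod_small; lia.
Qed.

Section Grid.
(* The s x s grid: node [r * s + c] is the cell in row [r] and column [c] (0-based). *)
Variable s : nat.

Lemma node_lt r c : r < s -> c < s -> r * s + c < s * s.
Proof. intros. nia. Qed.

Lemma grid_adj_sym u v : grid_adj s u v -> grid_adj s v u.
Proof. unfold grid_adj, absdiff, grid_coord; simpl. lia. Qed.

Lemma grid_adj_right r c : r < s -> c + 1 < s -> grid_adj s (r * s + c) (r * s + (c + 1)).
Proof.
  intros. unfold grid_adj, absdiff, grid_coord; simpl.
  destruct (divmod_unique s r c) as [A1 A2]; [lia|].
  destruct (divmod_unique s r (c + 1)) as [B1 B2]; [lia|].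
  rewrite A1, A2, B1, B2. repeat split; try apply node_lt; lia.
Qed.

Lemma grid_adj_down r c : r + 1 < s -> c < s -> grid_adj s (r * s + c) ((r + 1) * s + c).
Proof.
  intros. unfold grid_adj, absdiff, grid_coord; simpl.
  destruct (divmod_unique s r c) as [A1 A2]; [lia|].
  destruct (divmod_unique s (r + 1) c) as [B1 B2]; [lia|].
  rewrite A1, A2, B1, B2. repeat split; try apply node_lt; lia.
Qed.

Hypothesis s_pos : 0 < s.

Lemma node_decomp j : j < s * s -> j = (j / s) * s + j mod s /\ j / s < s /\ j mod s < s.
Proof.
  intros Hj. pose proof (Nat.div_mod j s ltac:(lia)).
  pose proof (Nat.mod_upper_bound j s ltac:(lia)).
  split; [lia|]. split; [apply Nat.Div0.div_lt_upper_bound; lia|auto].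
Qed.

Lemma comb_reach (Y : nat -> Prop) c0 :
  c0 < s ->
  (forall r, r < s -> Y (r * s + c0)) ->
  (forall r c c', r < s -> c < s -> Y (r * s + c) -> c0 <= c /\ (c0 <= c' <= c -> Y (r * s + c'))) ->
  forall j, j < s * s -> Y j -> reach (grid_adj s) Y j c0.
Proof.
  intros Hc0 Hspine Hrow j Hj Yj.
  assert (Hcol : forall r, r < s -> reach (grid_adj s) Y (r * s + c0) c0).
  { induction r as [|r IH]; intros Hr; [apply reach_refl|].
    apply reach_trans with (r * s + c0); [|apply IH; lia].
    apply reach_step; [apply Hspine; lia|]. apply grid_adj_sym.
    replace (S r) with (r + 1) by lia. apply grid_adj_down; lia. }
  destruct (node_decomp j Hj) as [E [Hr Hc]].
  set (r := j / s) in *. set (c := j mod s) in *. clearbody r c. subst j.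
  destruct (Hrow r c c Hr Hc Yj) as [Hc0c _].
  assert (Hline : forall d, c0 + d <= c -> reach (grid_adj s) Y (r * s + (c0 + d)) (r * s + c0)).
  { induction d as [|d IH]; intros Hd; [rewrite Nat.add_0_r; apply reach_refl|].
    apply reach_trans with (r * s + (c0 + d)); [|apply IH; lia].
    apply reach_step; [apply (Hrow r c); auto; lia|]. apply grid_adj_sym.
    replace (c0 + S d) with (c0 + d + 1) by lia. apply grid_adj_right; lia. }
  apply reach_trans with (r * s + c0); [|apply Hcol; auto].
  replace c with (c0 + (c - c0)) by lia. apply Hline. lia.
Qed.

End Grid.

Lemma parity_decomp r : r = 2 * (r / 2) + r mod 2 /\ r mod 2 < 2.
Proof. split; [apply Nat.div_mod_eq|apply Nat.mod_upper_bound; lia]. Qed.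

Section EvenGridPartition.
Variable s : nat.
Hypothesis s_ge2 : 2 <= s.

Definition in_col0 (j : nat) : bool := j mod s =? 0.
Definition in_half (p j : nat) : bool := negb (j mod s =? 0) && ((j / s) mod 2 =? p).

Definition col0_enum (t : nat) : nat := t * s.
Definition col0_index (j : nat) : nat := j / s.

Lemma in_col0_node r c : c < s -> in_col0 (r * s + c) = (c =? 0).
Proof. intros Hc. unfold in_col0. now rewrite (proj2 (divmod_unique s r c Hc)). Qed.

Lemma in_half_node p r c : c < s -> in_half p (r * s + c) = negb (c =? 0) && (r mod 2 =? p).
Proof. intros Hc. unfold in_half. now destruct (divmod_unique s r c Hc) as [-> ->]. Qed.

Lemma half_cover j : in_col0 j = false -> in_half ((j / s) mod 2) j = true.
Proof. intros Hcol. unfold in_col0, in_half in *. now rewrite Hcol, Nat.eqb_refl. Qed.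

Lemma col0_enumerates : enumerates (s * s) s in_col0 col0_enum col0_index.
Proof.
  unfold col0_enum, col0_index. split.
  - intros t Ht. destruct (divmod_unique s t 0) as [A _]; [lia|].
    rewrite Nat.add_0_r in A. split; [nia|]. split; [|exact A].
    rewrite <- (Nat.add_0_r (t * s)), in_col0_node by lia. reflexivity.
  - intros j Hj Hcol. destruct (node_decomp s ltac:(lia) j Hj) as [E [Hr _]].
    unfold in_col0 in Hcol. apply Nat.eqb_eq in Hcol. split; [exact Hr|lia].
Qed.

(* Any vertex set between the complement of column 0 and the whole grid is connected: the
   complement is a comb on column 1, and each node of column 0 is adjacent to column 1. *)
Lemma col0_complement_connected (V : nat -> Prop) :
  (forall j, j < s * s -> in_col0 j = false -> V j) -> (forall j, V j -> j < s * s) ->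
  induces_connected (grid_adj s) V.
Proof.
  intros HcoV HVn.
  set (Y := fun j => j < s * s /\ in_col0 j = false).
  apply (connected_of_core (grid_adj s) (grid_adj_sym s) Y V 1).
  - intros j [Hj Yj]. auto.
  - intros j [Hj Yj]. apply (comb_reach s ltac:(lia) Y 1); try lia; [| |split; auto].
    + intros r Hr. split; [apply node_lt; lia|]. now rewrite in_col0_node by lia.
    + intros r c c' Hr Hc [_ Yc]. rewrite in_col0_node in Yc by lia.
      apply Nat.eqb_neq in Yc. split; [lia|]. intros Hc'. split; [apply node_lt; lia|].
      rewrite in_col0_node by lia. apply Nat.eqb_neq. lia.
  - intros j Vj. pose proof (HVn j Vj) as Hj.
    destruct (in_col0 j) eqn:Hcol; [right|left; split; auto].
    destruct (node_decomp s ltac:(lia) j Hj) as [E [Hr Hc]].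
    set (r := j / s) in *. set (c := j mod s) in *. clearbody r c. subst j.
    rewrite in_col0_node in Hcol by exact Hc. apply Nat.eqb_eq in Hcol. subst c.
    exists (r * s + (0 + 1)). split; [split; [apply node_lt; lia|]|apply grid_adj_right; lia].
    now rewrite in_col0_node by lia.
Qed.

Variable m : nat.
Hypothesis s_eq : s = 2 * m.

Definition half_enum (p t : nat) : nat := (2 * (t / (s - 1)) + p) * s + (1 + t mod (s - 1)).
Definition half_index (j : nat) : nat := (j / s) / 2 * (s - 1) + (j mod s - 1).

(* Index [q * (s - 1) + c] of the half [p] is the cell in row [2 q + p], column [1 + c]. *)
Lemma half_enumerates p : p < 2 -> enumerates (s * s) (m * (s - 1)) (in_half p) (half_enum p) half_index.
Proof.
  intros Hp. unfold half_enum, half_index. split.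
  - intros t Ht.
    pose proof (Nat.div_mod t (s - 1) ltac:(lia)). pose proof (Nat.mod_upper_bound t (s - 1) ltac:(lia)).
    assert (Hq : t / (s - 1) < m) by (apply Nat.Div0.div_lt_upper_bound; lia).
    set (q := t / (s - 1)) in *. set (c := t mod (s - 1)) in *. clearbody q c.
    destruct (divmod_unique s (2 * q + p) (1 + c)) as [A B]; [lia|].
    destruct (divmod_unique 2 q p Hp) as [A2 B2]. rewrite (Nat.mul_comm q 2) in A2, B2.
    rewrite in_half_node, B2, A, A2, B by lia.
    repeat split; [apply node_lt; lia|now rewrite Nat.eqb_refl|lia].
  - intros j Hj Hin. destruct (node_decomp s ltac:(lia) j Hj) as [E [Hr Hc]].
    set (r := j / s) in *. set (c := j mod s) in *. clearbody r c. subst j.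
    rewrite in_half_node in Hin by exact Hc. apply andb_prop in Hin. destruct Hin as [Hc0 Hrp].
    apply negb_true_iff, Nat.eqb_neq in Hc0. apply Nat.eqb_eq in Hrp.
    destruct (parity_decomp r) as [Er _].
    assert (Hq : r / 2 < m) by lia.
    destruct (divmod_unique (s - 1) (r / 2) (c - 1)) as [A B]; [lia|]. rewrite A, B.
    split; [nia|lia].
Qed.

(* Any vertex set between the complement of a half and the whole grid is connected: the
   complement is a comb (column 0 plus all rows of the other parity), and each node of the
   half has a neighbour in the adjacent row of the other parity. *)
Lemma half_complement_connected p (V : nat -> Prop) : p < 2 ->
  (forall j, j < s * s -> in_half p j = false -> V j) -> (forall j, V j -> j < s * s) ->
  induces_connected (grid_adj s) V.
Proof.
  intros Hp HcoV HVn.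
  set (Y := fun j => j < s * s /\ in_half p j = false).
  apply (connected_of_core (grid_adj s) (grid_adj_sym s) Y V 0).
  - intros j [Hj Yj]. auto.
  - intros j [Hj Yj]. apply (comb_reach s ltac:(lia) Y 0); try lia; [| |split; auto].
    + intros r Hr. split; [apply node_lt; lia|]. now rewrite in_half_node by lia.
    + intros r c c' Hr Hc [_ Yc]. split; [lia|]. intros Hc'. split; [apply node_lt; lia|].
      rewrite in_half_node in * by lia.
      destruct (Nat.eqb_spec c' 0); [reflexivity|]. destruct (Nat.eqb_spec c 0); [lia|exact Yc].
  - intros j Vj. pose proof (HVn j Vj) as Hj.
    destruct (in_half p j) eqn:Hin; [right|left; split; auto].
    destruct (node_decomp s ltac:(lia) j Hj) as [E [Hr Hc]].
    set (r := j / s) in *. set (c := j mod s) in *. clearbody r c. subst j.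
    rewrite in_half_node in Hin by exact Hc. apply andb_prop in Hin. destruct Hin as [Hc0 Hrp].
    apply negb_true_iff, Nat.eqb_neq in Hc0. apply Nat.eqb_eq in Hrp.
    destruct (parity_decomp r) as [Er _].
    destruct p as [|p].
    + exists ((r + 1) * s + c). destruct (parity_decomp (r + 1)) as [Er' Hlt'].
      split; [split; [apply node_lt; lia|]|apply grid_adj_down; lia].
      rewrite in_half_node by exact Hc. destruct (Nat.eqb_spec c 0); [reflexivity|].
      apply Nat.eqb_neq. lia.
    + exists ((r - 1) * s + c). destruct (parity_decomp (r - 1)) as [Er' Hlt'].
      split; [split; [apply node_lt; lia|]|].
      * rewrite in_half_node by exact Hc. destruct (Nat.eqb_spec c 0); [reflexivity|].
        apply Nat.eqb_neq. lia.
      * apply grid_adj_sym. replace (r * s + c) with ((r - 1 + 1) * s + c) by (f_equal; f_equal; lia).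
        apply grid_adj_down; lia.
Qed.

End EvenGridPartition.

Lemma half_size s m : s = 2 * m -> s * s / 2 - s / 2 = m * (s - 1).
Proof.
  intros Hs. subst s.
  replace (2 * m * (2 * m)) with ((2 * m * m) * 2) by ring.
  rewrite Nat.div_mul, (Nat.mul_comm 2 m), Nat.div_mul by lia. nia.
Qed.

Section GridMatrix.
Variables s mC1 mC2 : nat.
Variables C1 C2 : nat -> nat -> bool.

Definition grid_matrix (i : nat) : nat -> bool :=
  if i <? mC1 then block_row (in_half s 0) (half_index s) (C1 i)
  else if i <? 2 * mC1 then block_row (in_half s 1) (half_index s) (C1 (i - mC1))
  else if i <? 2 * mC1 + mC2 then block_row (in_col0 s) (col0_index s) (C2 (i - 2 * mC1))
  else block_row (in_half s (i - (2 * mC1 + mC2))) (half_index s) (fun _ => false).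

Lemma grid_matrix_half p i : p < 2 -> i < mC1 ->
  grid_matrix (p * mC1 + i) = block_row (in_half s p) (half_index s) (C1 i).
Proof.
  intros Hp Hi. unfold grid_matrix.
  destruct p as [|[|p]]; [|simpl|lia].
  - rewrite (proj2 (Nat.ltb_lt _ _)) by lia. reflexivity.
  - rewrite (proj2 (Nat.ltb_ge _ _)), (proj2 (Nat.ltb_lt _ _)) by lia.
    now replace (mC1 + 0 + i - mC1) with i by lia.
Qed.

Lemma grid_matrix_col0 i : i < mC2 ->
  grid_matrix (2 * mC1 + i) = block_row (in_col0 s) (col0_index s) (C2 i).
Proof.
  intros Hi. unfold grid_matrix.
  rewrite (proj2 (Nat.ltb_ge _ _)), (proj2 (Nat.ltb_ge _ _)), (proj2 (Nat.ltb_lt _ _)) by lia.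
  now replace (2 * mC1 + i - 2 * mC1) with i by lia.
Qed.

Lemma grid_matrix_complement p :
  grid_matrix (2 * mC1 + mC2 + p) = block_row (in_half s p) (half_index s) (fun _ => false).
Proof.
  unfold grid_matrix.
  rewrite (proj2 (Nat.ltb_ge _ _)), (proj2 (Nat.ltb_ge _ _)), (proj2 (Nat.ltb_ge _ _)) by lia.
  now replace (2 * mC1 + mC2 + p - (2 * mC1 + mC2)) with p by lia.
Qed.

Variable m : nat.
Hypothesis s_ge2 : 2 <= s.
Hypothesis s_eq : s = 2 * m.

(* Every row reads one part through some pattern and contains the whole complement of that
   part, so its support is connected. *)
Lemma grid_matrix_measurement :
  measurement_matrix (s * s) (grid_adj s) (2 * mC1 + mC2 + 2) grid_matrix.
Proof.
  intros i Hi _. unfold row_support.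
  assert (Hgrid : forall j, j < s * s /\ grid_matrix i j = true -> j < s * s) by tauto.
  destruct (Nat.lt_ge_cases i (2 * mC1)) as [Hhalf | Hrest];
    [|destruct (Nat.lt_ge_cases i (2 * mC1 + mC2)) as [Hcol | Hcompl]].
  - set (p := i / mC1). set (i' := i mod mC1).
    assert (HmC1 : mC1 <> 0) by lia.
    assert (Hp : p < 2) by (apply Nat.Div0.div_lt_upper_bound; lia).
    assert (Hi' : i' < mC1) by (apply Nat.mod_upper_bound; exact HmC1).
    assert (Ei : i = p * mC1 + i') by (pose proof (Nat.div_mod i mC1 HmC1); lia).
    apply (half_complement_connected s s_ge2 m s_eq p); [exact Hp| |exact Hgrid].
    intros j Hj Hout. rewrite Ei, grid_matrix_half by auto. unfold block_row. now rewrite Hout.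
  - apply (col0_complement_connected s s_ge2); [|exact Hgrid].
    intros j Hj Hout. replace i with (2 * mC1 + (i - 2 * mC1)) by lia.
    rewrite grid_matrix_col0 by lia. unfold block_row. now rewrite Hout.
  - apply (half_complement_connected s s_ge2 m s_eq (i - (2 * mC1 + mC2))); [lia| |exact Hgrid].
    intros j Hj Hout.
    assert (Ei : grid_matrix i = block_row (in_half s (i - (2 * mC1 + mC2))) (half_index s) (fun _ => false)).
    { rewrite <- grid_matrix_complement. f_equal. lia. }
    rewrite Ei. unfold block_row. now rewrite Hout.
Qed.

(* Decoding: the complement rows give the mass outside each half, so each half is recovered
   through [C1]; this fixes the vector outside column 0, hence the mass outside column 0,
   and column 0 is then recovered through [C2]. *)
Lemma grid_matrix_identifies k :
  identifies k mC1 (m * (s - 1)) C1 -> identifies k mC2 s C2 ->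
  identifies k (2 * mC1 + mC2 + 2) (s * s) grid_matrix.
Proof.
  intros HC1 HC2. apply identifies_of_injective. intros x1 x2 S1 S2 Hrows.
  assert (Hhalf : forall p, p < 2 -> forall t, t < m * (s - 1) ->
            x1 (half_enum s p t) = x2 (half_enum s p t)).
  { intros p Hp.
    apply (block_recovery k (s * s) (m * (s - 1)) mC1 C1 (in_half s p) (half_enum s p) (half_index s));
      [exact HC1 | exact (half_enumerates s s_ge2 m s_eq p Hp) | exact S1 | exact S2 | |].
    - rewrite <- !(complement_row_sum (s * s) (in_half s p) (half_index s)).
      pose proof (Hrows (2 * mC1 + mC2 + p) ltac:(lia)) as Hrow.
      unfold mat_apply in Hrow. now rewrite grid_matrix_complement in Hrow.
    - intros i Hi. pose proof (Hrows (p * mC1 + i) ltac:(nia)) as Hrow.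
      unfold mat_apply in Hrow. now rewrite grid_matrix_half in Hrow. }
  assert (Hoff : forall j, j < s * s -> in_col0 s j = false -> x1 j = x2 j).
  { intros j Hj Hout. set (p := (j / s) mod 2).
    assert (Hp : p < 2) by (apply Nat.mod_upper_bound; lia).
    destruct (proj2 (half_enumerates s s_ge2 m s_eq p Hp) j Hj (half_cover s j Hout)) as [Ht Ej].
    rewrite <- Ej. now apply Hhalf. }
  assert (Hcol : forall t, t < s -> x1 (col0_enum s t) = x2 (col0_enum s t)).
  { apply (block_recovery k (s * s) s mC2 C2 (in_col0 s) (col0_enum s) (col0_index s));
      [exact HC2 | exact (col0_enumerates s s_ge2) | exact S1 | exact S2 | |].
    - apply sum_upto_ext. intros j Hj. destruct (in_col0 s j) eqn:Hout; auto.
    - intros i Hi. pose proof (Hrows (2 * mC1 + i) ltac:(lia)) as Hrow.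
      unfold mat_apply in Hrow. now rewrite grid_matrix_col0 in Hrow. }
  intros j Hj. destruct (in_col0 s j) eqn:Hin; [|now apply Hoff].
  destruct (proj2 (col0_enumerates s s_ge2) j Hj Hin) as [Ht Ej].
  rewrite <- Ej. now apply Hcol.
Qed.

End GridMatrix.

Theorem mainTheorem7 (s k : nat) (hs2 : (2 <= s)%nat) (hseven : Nat.Even s)
  (hk : (1 <= k)%nat) (mG mC1 mC2 : nat) :
  MG_is k (s * s) (grid_adj s) mG ->
  MC_is k (s * s / 2 - s / 2) mC1 ->
  MC_is k s mC2 ->
  (mG <= 2 * mC1 + mC2 + 2)%nat.
Proof.
  intros [_ HGmin] [[C1 HC1] _] [[C2 HC2] _]. destruct hseven as [m Hm].
  rewrite (half_size s m Hm) in HC1.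
  apply HGmin. exists (grid_matrix s mC1 mC2 C1 C2). split.
  - exact (grid_matrix_measurement s mC1 mC2 C1 C2 m hs2 Hm).
  - exact (grid_matrix_identifies s mC1 mC2 C1 C2 m hs2 Hm k HC1 HC2).
Qed.
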